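(* Let $\mathbb{X},\mathbb{Y}$ be finite-dimensional real Hilbert spaces, $f:\mathbb{X}\to(-\infty,\infty]$ and $g:\mathbb{Y}\to(-\infty,\infty]$ proper, convex and lower semicontinuous, $K:\mathbb{X}\to\mathbb{Y}$ linear, and $h:\mathbb{X}\to\mathbb{R}$ convex and differentiable with $\bar L$-Lipschitz gradient ($\bar L>0$). Let $(\tau_n)_{n\ge 0}$ be the primal stepsize sequence generated by the P-GRPDA algorithm described in the context, with parameters $\beta>0$, $\psi\in(1,\phi]$, $0<2\mu'<\mu<\psi/2$, $\tau_0>0$. Then $\tau_n\ge \eta:=\min\left\{\tau_0,\ \frac{\mu}{\sqrt{\beta}\|K\|},\ \frac{\mu'}{\bar L}\right\}$ for all $n$, and $\lim_{n\to\infty}\tau_n$ exists and satisfies $\lim_{n\to\infty}\tau_n\ge\eta>0$.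
   Context: $\phi=\frac{1+\sqrt5}{2}$; $\|K\|=\sup\{\|Kx\|:\|x\|=1\}$; $K^*$ is the adjoint of $K$; $g^*$ is the Fenchel conjugate of $g$; $\operatorname{prox}_{\lambda f}(x)=\arg\min_{u}\{f(u)+\frac{1}{2\lambda}\|u-x\|^2\}$. P-GRPDA: choose $x_0\in\mathbb{X}$, $y_0\in\mathbb{Y}$, set $z_0=x_0$, choose $\beta>0$, $\psi\in(1,\phi]$, $0<2\mu'<\mu<\psi/2$, $\tau_0>0$. For $n=1,2,\dots$: $z_n=\frac{\psi-1}{\psi}x_{n-1}+\frac1\psi z_{n-1}$; $x_n=\operatorname{prox}_{\tau_{n-1}f}\big(z_n-\tau_{n-1}K^*y_{n-1}-\tau_{n-1}\nabla h(x_{n-1})\big)$; $\tau_n=\min\left\{\tau_{n-1},\ \frac{\mu\|x_n-x_{n-1}\|}{\sqrt\beta\|Kx_n-Kx_{n-1}\|},\ \frac{\mu'\|x_n-x_{n-1}\|}{\|\nabla h(x_n)-\nabla h(x_{n-1})\|}\right\}$, $\sigma_n=\beta\tau_n$; $w_n=\operatorname{prox}_{\frac{1}{\sigma_n}g}\big(\frac{y_{n-1}}{\sigma_n}+Kx_n\big)$; $y_n=y_{n-1}+\sigma_n(Kx_n-w_n)$. Conventions in the $\tau_n$ update: $1/0=\infty$ (a term with zero denominator and nonzero numerator is ignored) and $0/0=\infty$ (so $\tau_n=\tau_{n-1}$ if $x_n=x_{n-1}$). *)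

From HB Require Import structures.
From mathcomp Require Import all_boot all_order all_algebra.
From mathcomp Require Import all_classical all_reals all_analysis.
Set Implicit Arguments. Unset Strict Implicit. Unset Printing Implicit Defensive.
Import Order.TTheory GRing.Theory Num.Theory.
Import numFieldNormedType.Exports.
Local Open Scope classical_set_scope.
Local Open Scope ring_scope.

(* The finite-dimensional real Hilbert spaces X, Y are modelled as
   column vectors 'cV[R]_n, 'cV[R]_m with the Euclidean inner product. *)
Definition dotv (R : realType) (n : nat) (x y : 'cV[R]_n) : R :=
  \sum_(i < n) x i 0 * y i 0.

Definition enorm (R : realType) (n : nat) (x : 'cV[R]_n) : R :=
  Num.sqrt (dotv x x).

Definition opnorm (R : realType) (m n : nat) (K : 'M[R]_(m, n)) : R :=
  sup [set enorm (K *m x) | x in [set x : 'cV[R]_n | enorm x = 1]].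

Definition phi (R : realType) : R := (1 + Num.sqrt 5) / 2.

Definition proper_fun (R : realType) (n : nat) (f : 'cV[R]_n -> \bar R) : Prop :=
  (forall x, f x != -oo%E) /\ (exists x, f x != +oo%E).

Definition convex_efun (R : realType) (n : nat) (f : 'cV[R]_n -> \bar R) : Prop :=
  forall (x y : 'cV[R]_n) (t : R), 0 < t < 1 ->
    let p := t *: x + (1 - t) *: y in let s := 1 - t in
    (f p <= t%:E * f x + s%:E * f y)%E.

Definition lsc_efun (R : realType) (n : nat) (f : 'cV[R]_n -> \bar R) : Prop :=
  forall a : R, closed [set x | (f x <= a%:E)%E].

Definition convex_rfun (R : realType) (n : nat) (h : 'cV[R]_n -> R) : Prop :=
  forall (x y : 'cV[R]_n) (t : R), 0 <= t <= 1 ->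
    h (t *: x + (1 - t) *: y) <= t * h x + (1 - t) * h y.

Definition grad (R : realType) (n : nat) (h : 'cV[R]_n -> R) (x : 'cV[R]_n)
  : 'cV[R]_n := \col_i ('d h x (delta_mx i 0)).

Definition is_prox (R : realType) (n : nat) (lam : R) (f : 'cV[R]_n -> \bar R)
  (v p : 'cV[R]_n) : Prop :=
  forall u : 'cV[R]_n,
    let a := (2 * lam)^-1 * enorm (p - v) ^+ 2 in
    let b := (2 * lam)^-1 * enorm (u - v) ^+ 2 in
    (f p + a%:E <= f u + b%:E)%E.

(* tau_n update with the conventions 1/0 = oo and 0/0 = oo: a term whose
   denominator vanishes is ignored in the min. *)
Definition tau_update (R : realType) (mu mu' beta taup ndx ndKx ndgh : R) : R :=
  let a := if ndKx == 0 then taup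
           else Num.min taup (mu * ndx / (Num.sqrt beta * ndKx)) in
  if ndgh == 0 then a else Num.min a (mu' * ndx / ndgh).

(* eta = min {tau0, mu/(sqrt beta ||K||), mu'/L}, same convention if ||K|| = 0. *)
Definition eta_bound (R : realType) (tau0 mu mu' beta nK L : R) : R :=
  if nK == 0 then Num.min tau0 (mu' / L)
  else Num.min (Num.min tau0 (mu / (Num.sqrt beta * nK))) (mu' / L).

Definition PGRPDA (R : realType) (n m : nat)
  (f : 'cV[R]_n -> \bar R) (g : 'cV[R]_m -> \bar R) (K : 'M[R]_(m, n))
  (h : 'cV[R]_n -> R) (beta psi mu mu' : R)
  (x z : nat -> 'cV[R]_n) (y w : nat -> 'cV[R]_m) (tau sigma : nat -> R) : Prop :=
  z 0%N = x 0%N /\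
  forall k : nat, (0 < k)%N ->
    [/\ z k = ((psi - 1) / psi) *: x k.-1 + psi^-1 *: z k.-1,
        is_prox (tau k.-1) f
          (z k - tau k.-1 *: (K^T *m y k.-1) - tau k.-1 *: grad h (x k.-1)) (x k),
        tau k = tau_update mu mu' beta (tau k.-1) (enorm (x k - x k.-1))
                  (enorm (K *m x k - K *m x k.-1))
                  (enorm (grad h (x k) - grad h (x k.-1))),
        sigma k = beta * tau k &
        is_prox (sigma k)^-1 g ((sigma k)^-1 *: y k.-1 + K *m x k) (w k)] /\
    y k = y k.-1 + sigma k *: (K *m x k - w k).

From HB Require Import structures.
From mathcomp Require Import all_boot all_order all_algebra.
From mathcomp Require Import all_classical all_reals all_analysis.
From mathcomp Require Import ring lra.
Import Order.TTheory GRing.Theory Num.Theory.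
Import numFieldNormedType.Exports.
Local Open Scope classical_set_scope.
Local Open Scope ring_scope.

(* Since ||K x_n - K x_{n-1}|| <= ||K|| ||x_n - x_{n-1}|| and
   ||grad h(x_n) - grad h(x_{n-1})|| <= L ||x_n - x_{n-1}||, every ratio that
   can enter the min defining tau_n is at least mu/(sqrt beta ||K||), resp.
   mu'/L.  Hence tau_{n-1} >= eta implies tau_n >= eta.  The stepsizes are
   nonincreasing by construction, so they converge to a limit >= eta. *)

Set Implicit Arguments.
Unset Strict Implicit.

Section EuclideanNorm.
Variables (R : realType) (n : nat).
Implicit Types v : 'cV[R]_n.

Lemma dotv_ge0 v : 0 <= dotv v v.
Proof. by apply: sumr_ge0 => i _; rewrite -expr2 sqr_ge0. Qed.

Lemma sqr_coord_le_dotv v i : v i 0 ^+ 2 <= dotv v v.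
Proof.
rewrite /dotv (bigD1 i) //= -expr2 lerDl.
by apply: sumr_ge0 => k _; rewrite -expr2 sqr_ge0.
Qed.

Lemma enorm_ge0 v : 0 <= enorm v.
Proof. exact: sqrtr_ge0. Qed.

Lemma enorm0 : enorm (0 : 'cV[R]_n) = 0.
Proof. by rewrite /enorm /dotv big1 ?sqrtr0 // => i _; rewrite mxE mul0r. Qed.

Lemma enorm_eq0 v : enorm v = 0 -> v = 0.
Proof.
move/eqP; rewrite sqrtr_eq0 => dotv_le0.
have /eqP dotv0 : dotv v v == 0 by rewrite eq_le dotv_le0 dotv_ge0.
apply/matrixP => i j; rewrite ord1 mxE.
have sqr_coord_ge0 (k : 'I_n) : true -> 0 <= v k 0 * v k 0.
  by move=> _; rewrite -expr2 sqr_ge0.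
have /eqP := psumr_eq0P sqr_coord_ge0 dotv0 (i := i) isT.
by rewrite mulf_eq0 orbb => /eqP.
Qed.

Lemma enormZ c v : enorm (c *: v) = `|c| * enorm v.
Proof.
rewrite /enorm /dotv.
have -> : \sum_(i < n) (c *: v) i 0 * (c *: v) i 0 =
          c ^+ 2 * \sum_(i < n) v i 0 * v i 0.
  by rewrite mulr_sumr; apply: eq_bigr => i _; rewrite !mxE; ring.
by rewrite sqrtrM ?sqr_ge0 // sqrtr_sqr.
Qed.

End EuclideanNorm.

Section OperatorNorm.
Variables (R : realType) (m n : nat) (K : 'M[R]_(m, n)).

Implicit Types u v x : 'cV[R]_n.

Let unit_image := [set enorm (K *m x) | x in [set x : 'cV[R]_n | enorm x = 1]].

Lemma unit_image_bounded : exists C, forall x, enorm x = 1 -> enorm (K *m x) <= C.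
Proof.
exists (Num.sqrt (\sum_(i < m) (\sum_(j < n) `|K i j|) ^+ 2)) => x x1.
have dotx1 : dotv x x = 1 by rewrite -(sqr_sqrtr (dotv_ge0 x)) -/(enorm x) x1 expr1n.
have coord_le1 j : `|x j 0| <= 1.
  have := sqr_coord_le_dotv x j; rewrite dotx1 -(real_normK (num_real _)).
  by have := normr_ge0 (x j 0); nra.
have Kx_coord_le i : `|(K *m x) i 0| <= \sum_(j < n) `|K i j|.
  rewrite mxE; apply: le_trans (ler_norm_sum _ _ _) _; apply: ler_sum => j _.
  by rewrite normrM ler_piMr.
apply: ler_wsqrtr; apply: ler_sum => i _.
rewrite -expr2 -(real_normK (num_real _)) !expr2.
by apply: ler_pM; rewrite ?normr_ge0 ?Kx_coord_le.
Qed.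

Lemma has_sup_unit_image u : enorm u = 1 -> has_sup unit_image.
Proof.
move=> u1; split; first by exists (enorm (K *m u)), u.
by have [C KC] := unit_image_bounded; exists C => _ [x x1 <-]; exact: KC.
Qed.

Lemma le_unit_image_opnorm u : enorm u = 1 -> enorm (K *m u) <= opnorm K.
Proof. by move=> u1; apply: (sup_upper_bound (has_sup_unit_image u1)); exists u. Qed.

Lemma opnorm_ge0 : 0 <= opnorm K.
Proof.
have [U0|/set0P [_ [u u1 _]]] := eqVneq unit_image set0.
  by rewrite /opnorm -/unit_image U0 sup0.
exact: le_trans (enorm_ge0 _) (le_unit_image_opnorm u1).
Qed.

Lemma enorm_mulmx_le v : enorm (K *m v) <= opnorm K * enorm v.
Proof.
have [/enorm_eq0 ->|v_neq0] := eqVneq (enorm v) 0.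
  by rewrite mulmx0 !enorm0 mulr0.
have v_gt0 : 0 < enorm v by rewrite lt_def v_neq0 enorm_ge0.
have normalized : enorm ((enorm v)^-1 *: v) = 1.
  by rewrite enormZ ger0_norm ?invr_ge0 ?enorm_ge0 // mulVf.
have := le_unit_image_opnorm normalized.
rewrite -scalemxAr enormZ ger0_norm ?invr_ge0 ?enorm_ge0 //.
by rewrite mulrC ler_pdivrMr.
Qed.

End OperatorNorm.

Section Stepsize.
Variable R : realType.

Lemma ler_pdiv_ratio (c p q e : R) :
  0 < c -> 0 < p -> 0 < q -> q <= p * e -> c / p <= c * e / q.
Proof. by move=> c_gt0 p_gt0 q_gt0 qpe; rewrite ler_pdivlMr // mulrAC ler_pdivrMr //; nra. Qed.

Lemma ge_guarded_min (eta a t d : R) :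
  eta <= a -> (d != 0 -> eta <= t) -> eta <= (if d == 0 then a else Num.min a t).
Proof. by move=> eta_a eta_t; case: eqP => [//|/eqP d0]; rewrite le_min eta_a eta_t. Qed.

Lemma tau_update_le_prev (mu mu' beta taup ndx ndKx ndgh : R) :
  tau_update mu mu' beta taup ndx ndKx ndgh <= taup.
Proof. by rewrite /tau_update; do 2 case: ifP => _; rewrite ?ge_min ?lexx ?orbT. Qed.

Variables (mu mu' beta nK L : R).
Hypotheses (mu_gt0 : 0 < mu) (mu'_gt0 : 0 < mu') (beta_gt0 : 0 < beta)
           (nK_ge0 : 0 <= nK) (L_gt0 : 0 < L).

Lemma tau_update_ge (eta taup ndx ndKx ndgh : R) :
  eta <= taup -> (nK != 0 -> eta <= mu / (Num.sqrt beta * nK)) -> eta <= mu' / L ->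
  0 <= ndKx -> 0 <= ndgh -> ndKx <= nK * ndx -> ndgh <= L * ndx ->
  eta <= tau_update mu mu' beta taup ndx ndKx ndgh.
Proof.
move=> eta_taup eta_K eta_L ndKx_ge0 ndgh_ge0 ndKx_le ndgh_le.
have sqrtb_gt0 : 0 < Num.sqrt beta by rewrite sqrtr_gt0.
apply: ge_guarded_min; first apply: ge_guarded_min => // ndKx_neq0.
  have ndKx_gt0 : 0 < ndKx by rewrite lt_def ndKx_neq0.
  have nK_gt0 : 0 < nK.
    by rewrite lt_def nK_ge0 andbT; apply: contraTneq ndKx_le => ->; rewrite mul0r -ltNge.
  apply: le_trans (eta_K (lt0r_neq0 nK_gt0)) _.
  apply: ler_pdiv_ratio; rewrite ?mulr_gt0 //.
  by rewrite -mulrA ler_pM2l.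
move=> ndgh_neq0; apply: le_trans eta_L _.
by apply: ler_pdiv_ratio; rewrite // lt_def ndgh_neq0.
Qed.

End Stepsize.

Section EtaBound.
Variables (R : realType) (tau0 mu mu' beta nK L : R).
Let eta := eta_bound tau0 mu mu' beta nK L.

Lemma eta_bound_le_tau0 : eta <= tau0.
Proof. by rewrite /eta /eta_bound; case: ifP => _; rewrite !ge_min ?lexx. Qed.

Lemma eta_bound_le_lipschitz : eta <= mu' / L.
Proof. by rewrite /eta /eta_bound; case: ifP => _; rewrite !ge_min ?lexx ?orbT. Qed.

Lemma eta_bound_le_opnorm : nK != 0 -> eta <= mu / (Num.sqrt beta * nK).
Proof. by move=> nK_neq0; rewrite /eta /eta_bound (negbTE nK_neq0) !ge_min lexx ?orbT. Qed.

Lemma eta_bound_gt0 :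
  0 < tau0 -> 0 < mu -> 0 < mu' -> 0 < beta -> 0 <= nK -> 0 < L -> 0 < eta.
Proof.
move=> tau0_gt0 mu_gt0 mu'_gt0 beta_gt0 nK_ge0 L_gt0.
have mu'L_gt0 : 0 < mu' / L by exact: divr_gt0.
rewrite /eta /eta_bound; case: ifP => nK0; rewrite !lt_min tau0_gt0 mu'L_gt0 ?andbT //=.
by apply: divr_gt0; rewrite // mulr_gt0 ?sqrtr_gt0 // lt_def nK0.
Qed.

End EtaBound.

Lemma nonincreasing_lbounded_cvg (R : realType) (u : R ^nat) (eta : R) :
  (forall k, u k.+1 <= u k) -> (forall k, eta <= u k) ->
  cvg (u @ \oo) /\ eta <= lim (u @ \oo).
Proof.
move=> u_noninc u_ge; have u_cvg : cvg (u @ \oo).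
  apply/cvg_ex; exists (inf (range u)).
  apply: nonincreasing_cvgn; first exact/nonincreasing_seqP.
  by exists eta => _ [k _ <-].
by split=> //; apply: limr_ge => //; apply: nearW.
Qed.

Lemma PGRPDA_tau_step (R : realType) (n m : nat)
  (f : 'cV[R]_n -> \bar R) (g : 'cV[R]_m -> \bar R) (K : 'M[R]_(m, n))
  (h : 'cV[R]_n -> R) (beta psi mu mu' : R)
  (x z : nat -> 'cV[R]_n) (y w : nat -> 'cV[R]_m) (tau sigma : nat -> R) :
  PGRPDA f g K h beta psi mu mu' x z y w tau sigma ->
  forall k, tau k.+1 = tau_update mu mu' beta (tau k) (enorm (x k.+1 - x k))
                         (enorm (K *m x k.+1 - K *m x k))
                         (enorm (grad h (x k.+1) - grad h (x k))).
Proof. by move=> [_ iter] k; have [[_ _ -> _ _] _] := iter k.+1 isT. Qed.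

Theorem proposition3p1 (R : realType) (n m : nat)
  (f : 'cV[R]_n -> \bar R) (g : 'cV[R]_m -> \bar R) (K : 'M[R]_(m, n))
  (h : 'cV[R]_n -> R) (L : R)
  (beta psi mu mu' tau0 : R)
  (x z : nat -> 'cV[R]_n) (y w : nat -> 'cV[R]_m) (tau sigma : nat -> R) :
  proper_fun f -> convex_efun f -> lsc_efun f ->
  proper_fun g -> convex_efun g -> lsc_efun g ->
  convex_rfun h -> (forall v, differentiable h v) ->
  0 < L ->
  (forall u v, enorm (grad h u - grad h v) <= L * enorm (u - v)) ->
  0 < beta -> 1 < psi -> psi <= phi R ->
  0 < 2 * mu' -> 2 * mu' < mu -> mu < psi / 2 ->
  0 < tau0 -> tau 0%N = tau0 ->
  PGRPDA f g K h beta psi mu mu' x z y w tau sigma ->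
  let eta := eta_bound tau0 mu mu' beta (opnorm K) L in
  (forall k, eta <= tau k) /\
  cvg (tau @ \oo) /\ eta <= lim (tau @ \oo) /\ 0 < eta.
Proof.
move=> _ _ _ _ _ _ _ _ L_gt0 grad_lip beta_gt0 _ _ mu'2_gt0 mu'_lt_mu _
  tau0_gt0 tau_0 iter eta.
have mu'_gt0 : 0 < mu' by lra.
have mu_gt0 : 0 < mu by lra.
have tau_step := PGRPDA_tau_step iter.
have tau_ge k : eta <= tau k.
  elim: k => [|k IH]; first by rewrite tau_0 eta_bound_le_tau0.
  rewrite tau_step; apply: (tau_update_ge (nK := opnorm K) (L := L));
    rewrite ?enorm_ge0 ?opnorm_ge0 //.
  - exact: eta_bound_le_opnorm.
  - exact: eta_bound_le_lipschitz.
  - by rewrite -mulmxBr enorm_mulmx_le.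
have [tau_cvg lim_ge] : cvg (tau @ \oo) /\ eta <= lim (tau @ \oo).
  by apply: nonincreasing_lbounded_cvg tau_ge => k; rewrite tau_step tau_update_le_prev.
by do 3 split => //; apply: eta_bound_gt0; rewrite ?opnorm_ge0.
Qed.
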